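(* Let $G$ be a finite graph with $d \geq 2$ vertices satisfying: (1) $G$ is connected; (2) $G$ is simple; (3) $G$ is strictly subtrivalent; (4) the shortest path between any two distinct vertices of degree $3$ contains at least $3$ edges; (5) $G$ contains no triangle. Let $g = m - d + 1$, where $m$ is the number of edges of $G$. Then $d \geq 2g+2$.
   Context: A graph is strictly subtrivalent if every vertex has degree at most $3$ and at least one vertex has degree less than $3$. The quantity $g = m-d+1 = h^1(G,k)$ (the first Betti number of $G$ viewed as a $1$-dimensional simplicial complex) is called the genus of $G$; it is not the graph-theoretic genus. *)

From mathcomp Require Import all_boot all_order all_algebra.
Set Implicit Arguments. Unset Strict Implicit. Unset Printing Implicit Defensive.

Definition simple_graph (T : finType) (e : rel T) : Prop :=
  symmetric e /\ irreflexive e.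

Definition deg (T : finType) (e : rel T) (x : T) : nat := #|[set y | e x y]|.

Definition nedges (T : finType) (e : rel T) : nat :=
  #|[set E : {set T} | [exists x, exists y, e x y && (E == [set x; y])]]|.

Definition connected_graph (T : finType) (e : rel T) : Prop :=
  forall x y : T, connect e x y.

Definition strictly_subtrivalent (T : finType) (e : rel T) : Prop :=
  (forall x, deg e x <= 3) /\ (exists x, deg e x < 3).

(* every path between two distinct degree-3 vertices has at least 3 edges;
   a path from u to v is u :: p with path e u p and last u p = v, having size p edges *)
Definition deg3_far (T : finType) (e : rel T) : Prop :=
  forall (u v : T) (p : seq T), u != v -> deg e u = 3 -> deg e v = 3 ->
    path e u p -> last u p = v -> 3 <= size p.

Definition triangle_free (T : finType) (e : rel T) : Prop :=
  forall x y z : T, ~ [&& e x y, e y z & e z x].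

From mathcomp Require Import all_boot all_order all_algebra.
From mathcomp Require Import zify.

(* The inequality d >= 2g + 2 says 2m + 4 <= 3d, i.e. that the deficiency
   sum_x (3 - deg x) is at least 4.  Every vertex of degree < 3 contributes at
   least 1.  Neighbours of a degree-3 vertex have degree < 3, and two degree-3
   vertices share no neighbour, so there are at least three times as many
   vertices of degree < 3 as of degree 3.  This leaves only small graphs, which
   are handled by the parity of 3d - 2m and, on three vertices, by
   triangle-freeness. *)

Set Implicit Arguments.
Unset Strict Implicit.
Unset Printing Implicit Defensive.

Section SimpleGraph.
Variables (T : finType) (e : rel T).
Hypotheses (e_sym : symmetric e) (e_irr : irreflexive e).

Definition edge_set : {set {set T}} :=
  [set E : {set T} | [exists x, exists y, e x y && (E == [set x; y])]].

Lemma neq_adj x y : e x y -> x != y.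
Proof. by apply: contraTneq => ->; rewrite e_irr. Qed.

Lemma deg_incident_edges x : deg e x = #|[set E in edge_set | x \in E]|.
Proof.
have -> : [set E in edge_set | x \in E] = [set [set x; y] | y in [set y | e x y]].
  apply/setP => E; rewrite !inE; apply/andP/imsetP.
  - case=> /existsP[a /existsP[b /andP[eab /eqP->]]]; rewrite in_set2.
    case/orP=> /eqP xE.
      by exists b; [rewrite inE xE | rewrite xE].
    by exists a; [rewrite inE xE e_sym | rewrite xE setUC].
  - case=> y; rewrite inE => exy ->; split; last exact: set21.
    by apply/existsP; exists x; apply/existsP; exists y; rewrite exy eqxx.
rewrite card_in_imset // => y1 y2; rewrite !inE => exy1 _ E12.
have : y1 \in [set x; y2] by rewrite -E12 set22.
by rewrite in_set2 => /orP[/eqP y1x | /eqP //]; move: exy1; rewrite y1x e_irr.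
Qed.

Lemma card_edge E : E \in edge_set -> #|E| = 2.
Proof.
rewrite inE => /existsP[a /existsP[b /andP[eab /eqP ->]]].
by rewrite cards2 neq_adj.
Qed.

Lemma handshake : \sum_x deg e x = 2 * nedges e.
Proof.
under eq_bigr => x _ do rewrite deg_incident_edges -sum1_card big_mkcond /=.
rewrite exchange_big /= /nedges -/edge_set -sum1_card big_distrr /=.
rewrite [RHS]big_mkcond /=; apply: eq_bigr => E _.
case: ifP => EinE; last by apply: big1 => y _; rewrite inE EinE.
rewrite muln1 -(card_edge EinE) -sum1_card [RHS]big_mkcond /=.
by apply: eq_bigr => y _; rewrite inE EinE.
Qed.

Lemma deg_le_pred_card x : deg e x <= #|T|.-1.
Proof.
rewrite /deg -(cardsC1 x); apply/subset_leq_card/subsetP => y.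
by rewrite !inE eq_sym; apply: neq_adj.
Qed.

Lemma deg_full_adj x y : deg e x = #|T|.-1 -> y != x -> e x y.
Proof.
move=> dx yx; have adj_setC1 : [set z | e x z] = [set~ x].
  apply/eqP; rewrite eqEcard cardsC1 -dx leqnn andbT.
  by apply/subsetP => z; rewrite !inE eq_sym; apply: neq_adj.
by move: yx; rewrite -in_setC1 -adj_setC1 inE.
Qed.

Lemma triangle_free_deg_lt : triangle_free e -> 2 < #|T| ->
  exists x, deg e x < #|T|.-1.
Proof.
move=> tf /card_gt2P[x [y [z [_ [xy yz zx]]]]].
case: (pickP (fun v => deg e v < #|T|.-1)) => [v | full]; first by exists v.
have {}full v : deg e v = #|T|.-1.
  by apply/eqP; rewrite eqn_leq deg_le_pred_card leqNgt full.
by case: (tf x y z); rewrite !deg_full_adj // eq_sym.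
Qed.

Section Subcubic.
Hypothesis deg_le3 : forall x, deg e x <= 3.

Definition deficiency : nat := \sum_x (3 - deg e x).

Lemma nedges_deficiency : 2 * nedges e + deficiency = 3 * #|T|.
Proof.
rewrite -handshake /deficiency -big_split /= (eq_bigr (fun _ => 3)).
  by rewrite sum_nat_const mulnC.
by move=> x _; rewrite subnKC.
Qed.

Lemma card_deg_neq3_le_deficiency : #|[set x | deg e x != 3]| <= deficiency.
Proof.
rewrite -sum1_card big_mkcond; apply: leq_sum => x _; rewrite inE.
by have := deg_le3 x; case: eqP => /= [->|]; lia.
Qed.

Lemma card_le_deficiency_low_deg x0 : (forall x, deg e x <= 2) ->
  deg e x0 <= 1 -> #|T|.+1 <= deficiency.
Proof.
move=> deg_le2 dx0; apply: (@leq_trans (\sum_x (1 + (x == x0)))).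
  rewrite big_split /= sum_nat_const muln1 (bigD1 x0) //= eqxx big1 ?addn0 ?addn1 //.
  by move=> x /negbTE ->.
apply: leq_sum => x _; have := deg_le2 x.
by case: eqP => [->|_] /=; lia.
Qed.

Hypothesis far : deg3_far e.

Lemma deg3_adj_deg_neq3 u w : deg e u = 3 -> e u w -> deg e w != 3.
Proof.
move=> du euw; apply/eqP => dw.
have uw_path : path e u [:: w] by rewrite /= euw.
by have := far (neq_adj euw) du dw uw_path erefl.
Qed.

Lemma deg3_no_common_adj u v w :
  deg e u = 3 -> deg e v = 3 -> e u w -> e v w -> u = v.
Proof.
move=> du dv euw evw; apply/eqP/negP => /negP uv.
have uwv_path : path e u [:: w; v] by rewrite /= euw e_sym evw.
by have := far uv du dv uwv_path erefl.
Qed.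

Lemma card_deg3_le : 3 * #|[set x | deg e x == 3]| <= #|[set x | deg e x != 3]|.
Proof.
have adj_sum x : deg e x = \sum_w e x w.
  by rewrite /deg -sum1_card big_mkcond; apply: eq_bigr => w _; rewrite inE.
have -> : 3 * #|[set x | deg e x == 3]| = \sum_(x | deg e x == 3) \sum_w e x w.
  rewrite mulnC -sum1_card big_distrl /=.
  by apply: eq_big => x; rewrite inE // => /eqP <-; rewrite mul1n adj_sum.
rewrite exchange_big /= -sum1_card [leqRHS]big_mkcond /=; apply: leq_sum => w _.
rewrite inE; case: eqP => [dw | _] /=.
  rewrite big1 // => x /eqP dx; apply/eqP; rewrite eqb0; apply/negP => exw.
  by have := deg3_adj_deg_neq3 dx exw; rewrite dw.
rewrite (eq_bigr (fun x => if e x w then 1 else 0)) // -big_mkcondr sum1dep_card.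
apply/card_le1_eqP => x y; rewrite !inE => /andP[/eqP dx exw] /andP[/eqP dy eyw].
exact: deg3_no_common_adj dy dx eyw exw.
Qed.

Lemma deficiency_ge4 : 1 < #|T| -> triangle_free e -> 4 <= deficiency.
Proof.
move=> T_gt1 tf; set D3 := [set x | deg e x == 3].
have card_split : #|D3| + #|[set x | deg e x != 3]| = #|T|.
  by rewrite -(cardsC D3); congr (_ + _); apply: eq_card => x; rewrite !inE.
have := card_deg_neq3_le_deficiency; have := card_deg3_le.
have := nedges_deficiency; rewrite -/D3.
(* With [2 * nedges e + deficiency = 3 * #|T|], parity excludes deficiency 3
   when #|T| is 4 (a single degree-3 vertex with its neighbours) or 2. *)
have [no_deg3 | D3_gt0] := posnP #|D3|; last lia.
have deg_le2 x : deg e x <= 2.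
  have : x \notin D3 by rewrite (cards0_eq no_deg3) inE.
  by rewrite inE; have := deg_le3 x; lia.
have [T_ge4 | T_le3] := leqP 4 #|T|; first lia.
have [x0 dx0] : exists x0, deg e x0 <= 1.
  have [T_gt2 | T_le2] := ltnP 2 #|T|.
    by have [x0 dx0] := triangle_free_deg_lt tf T_gt2; exists x0; lia.
  have /card_gt0P[x0 _] : 0 < #|T| by lia.
  by exists x0; have := deg_le_pred_card x0; lia.
by have := card_le_deficiency_low_deg deg_le2 dx0; lia.
Qed.

End Subcubic.
End SimpleGraph.

Local Open Scope ring_scope.

Theorem lemma1p2 (T : finType) (e : rel T) :
  (2 <= #|T|)%N ->
  connected_graph e ->
  simple_graph e ->
  strictly_subtrivalent e ->
  deg3_far e ->
  triangle_free e ->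
  let d : int := (#|T|)%:Z in
  let g : int := (nedges e)%:Z - d + 1 in
  2 * g + 2 <= d.
Proof.
move=> T_gt1 _ [e_sym e_irr] [deg_le3 _] far tf; cbv zeta.
have := nedges_deficiency e_sym e_irr deg_le3.
have := deficiency_ge4 e_sym e_irr deg_le3 far T_gt1 tf.
lia.
Qed.
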